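(* Let $X$ be a compact metric space and $f\colon X\to X$ continuous. If $(X,f)$ has $\gamma$-restricted two-sided orbital limit shadowing, then $ICT_f\subseteq\gamma_f$.
   Context: A full trajectory is $\langle z_i\rangle_{i\in\mathbb Z}$ with $f(z_i)=z_{i+1}$. For two-sided sequences, $\omega(\langle x_i\rangle)=\bigcap_{M}\overline{\{x_n:n>M\}}$, $\alpha(\langle x_i\rangle)=\bigcap_M\overline{\{x_n:n<-M\}}$; for $x\in X$, $\omega(x)$ is the set of accumulation points of $x,f(x),f^2(x),\dots$. A two-sided asymptotic pseudo-orbit is $\langle x_i\rangle_{i\in\mathbb Z}$ with $d(f(x_i),x_{i+1})\to0$ as $i\to\pm\infty$. $\gamma$-restricted two-sided orbital limit shadowing: for every two-sided asymptotic pseudo-orbit $\langle x_i\rangle$ with $\alpha(\langle x_i\rangle)=\omega(\langle x_i\rangle)$ there is a full trajectory $\langle z_i\rangle$ with $\alpha(\langle z_i\rangle)=\alpha(\langle x_i\rangle)$ and $\omega(\langle z_i\rangle)=\omega(\langle x_i\rangle)$. $ICT_f$ is the set of nonempty closed internally chain transitive sets ($A$ is internally chain transitive if for all $a,b\in A$ and $\delta>0$ there exist $x_0=a,\dots,x_N=b$ in $A$, $N\ge1$, with $d(f(x_i),x_{i+1})<\delta$). The $\gamma$-limit set $\gamma(x)$ of $x\in X$: $y\in\gamma(x)$ iff $y\in\omega(x)$ and there exist a sequence $\langle y_i\rangle_{i\ge1}$ in $X$ and a strictly increasing sequence $\langle n_i\rangle$ in $\mathbb N$ with $f^{n_i}(y_i)=x$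 for each $i$ and $y_i\to y$. $\gamma_f=\{\gamma(x):x\in X\}$. *)

From HB Require Import structures.
From mathcomp Require Import all_boot all_order all_algebra.
From mathcomp Require Import all_classical all_reals all_analysis.
Set Implicit Arguments. Unset Strict Implicit. Unset Printing Implicit Defensive.
Import Order.TTheory GRing.Theory Num.Theory.
Local Open Scope classical_set_scope.
Local Open Scope ring_scope.

Section Dyn.
Context {R : realType} {X : metricType R}.
Implicit Types (f : X -> X).

Definition full_trajectory f (z : int -> X) : Prop :=
  forall i : int, f (z i) = z (i + 1).

Definition omega_seq (x : int -> X) : set X :=
  [set y | forall M : int, closure [set x n | n in [set n : int | M < n]] y].

Definition alpha_seq (x : int -> X) : set X :=
  [set y | forall M : int, closure [set x n | n in [set n : int | n < - M]] y].

Definition omega_pt f (x : X) : set X :=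
  [set y | forall N : nat, closure [set iter n f x | n in [set n : nat | (N <= n)%N]] y].

Definition two_sided_asymptotic_pseudo_orbit f (x : int -> X) : Prop :=
  forall e : R, 0 < e -> exists N : int, forall i : int,
    N <= `|i| -> mdist (f (x i)) (x (i + 1)) < e.

Definition gamma_restricted_two_sided_orbital_limit_shadowing f : Prop :=
  forall x : int -> X, two_sided_asymptotic_pseudo_orbit f x ->
    alpha_seq x = omega_seq x ->
    exists z : int -> X, full_trajectory f z /\
      alpha_seq z = alpha_seq x /\ omega_seq z = omega_seq x.

Definition internally_chain_transitive f (A : set X) : Prop :=
  forall a b : X, A a -> A b -> forall delta : R, 0 < delta ->
    exists (N : nat) (x : nat -> X), (1 <= N)%N /\ x 0%N = a /\ x N = b /\
      (forall i : nat, (i <= N)%N -> A (x i)) /\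
      (forall i : nat, (i < N)%N -> mdist (f (x i)) (x i.+1) < delta).

Definition ICT f : set (set X) :=
  [set A | A !=set0 /\ closed A /\ internally_chain_transitive f A].

Definition gamma_limit f (x : X) : set X :=
  [set y | omega_pt f x y /\
    exists (ys : nat -> X) (n : nat -> nat),
      (forall i : nat, (n i < n i.+1)%N) /\
      (forall i : nat, iter (n i) f (ys i) = x) /\
      (ys @ \oo --> y)].

Definition gamma_f f : set (set X) := [set gamma_limit f x | x in [set: X]].

End Dyn.

(** Fix [a] in a closed internally chain transitive set [A].  For every [k],
    internal chain transitivity and compactness give a [1/(k+1)]-chain in [A]
    from [a] back to [a] passing [1/(k+1)]-close to every point of [A].  Running
    through these loops one after the other gives a forward asymptotic
    pseudo-orbit whose omega-limit set is [A]; running through the reversed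
    loops gives the backward half, whose alpha-limit set is again [A].  A full
    trajectory [z] with [alpha z = omega z = A] shadows this sequence, and then
    [gamma (z 0) = A]: its omega-limit set is [omega z = A], and each point of
    [A = alpha z] is a limit of points [z (-n_i)], which are preimages of [z 0]. *)

From HB Require Import structures.
From mathcomp Require Import all_boot all_order all_algebra.
From mathcomp Require Import all_classical all_reals all_analysis.
From mathcomp Require Import zify.
From mathcomp Require finmap.

Set Implicit Arguments. Unset Strict Implicit. Unset Printing Implicit Defensive.
Import Order.TTheory GRing.Theory Num.Theory.
Local Open Scope classical_set_scope.
Local Open Scope ring_scope.

Section SeqLoops.
Variable T : eqType.
Implicit Types (e : rel T) (a : T) (p q s : seq T).

Lemma sorted_nth_cat e x0 p q n : sorted e q ->
  (size p <= n)%N -> (n.+1 < size (p ++ q))%N ->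
  e (nth x0 (p ++ q) n) (nth x0 (p ++ q) n.+1).
Proof.
move=> /sortedP eq pn; rewrite size_cat !nth_cat !ltnNge pn (leqW pn) /= subSn //.
by move=> nq; apply: eq; lia.
Qed.

Lemma last_rev_belast a s : last a (rev (belast a s)) = a.
Proof. by case: s => //= y s; rewrite rev_cons last_rcons. Qed.

Lemma rev_loop_path e a s : last a s = a -> path e a s ->
  path (fun u v => e v u) a (rev (belast a s)).
Proof. by move=> sa eas; have := rev_path (fun u v => e v u) a s; rewrite sa => ->. Qed.

Lemma mem_belast_loop a s : s != [::] -> last a s = a -> belast a s =i s.
Proof.
case: s => [//|y s] _ sa z.
have a_s : a \in y :: s by rewrite -sa /= mem_last.
have -> : (z \in belast a (y :: s)) = (z \in a :: y :: s).
  by rewrite [in RHS]lastI sa mem_rcons /= !inE orbA orbb.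
by rewrite inE; case: eqP => // ->.
Qed.

End SeqLoops.

Section InfiniteConcat.
Variables (T : eqType) (a : T) (c : nat -> seq T).
Hypothesis c_neq0 : forall k, c k != [::].

Definition concat_prefix M := flatten [seq c k | k <- iota 0 M].

(* The infinite word [c 0 ++ c 1 ++ ...], read off a long enough finite prefix. *)
Definition iconcat n := nth a (concat_prefix n.+1) n.

Lemma concat_prefixD M d :
  concat_prefix (M + d) = concat_prefix M ++ flatten [seq c k | k <- iota M d].
Proof. by rewrite /concat_prefix iotaD map_cat flatten_cat. Qed.

Lemma concat_prefixS M : concat_prefix M.+1 = concat_prefix M ++ c M.
Proof. by rewrite -addn1 concat_prefixD /= cats0. Qed.

Lemma size_concat_prefix M : (M <= size (concat_prefix M))%N.
Proof.
elim: M => [//|M IH]; rewrite concat_prefixS size_cat.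
by have := c_neq0 M; rewrite -size_eq0 -lt0n; lia.
Qed.

Lemma nth_concat_prefix M M' n : (M <= M')%N -> (n < size (concat_prefix M))%N ->
  nth a (concat_prefix M') n = nth a (concat_prefix M) n.
Proof. by move=> /subnKC <- nM; rewrite concat_prefixD nth_cat nM. Qed.

Lemma iconcatE M n : (n < size (concat_prefix M))%N ->
  iconcat n = nth a (concat_prefix M) n.
Proof.
move=> nM; rewrite /iconcat; have [Mn|nM'] := leqP M n.+1.
  exact: nth_concat_prefix.
by rewrite (nth_concat_prefix (ltnW nM')) // size_concat_prefix.
Qed.

Lemma iconcat_mem n : exists k, iconcat n \in c k.
Proof.
have /(mem_nth a)/flattenP[_ /mapP[k _ ->] nk] := size_concat_prefix n.+1.
by exists k.
Qed.

Lemma iconcat_onto k z : z \in c k -> exists2 n, (k <= n)%N & iconcat n = z.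
Proof.
move=> zk; exists (size (concat_prefix k) + index z (c k))%N.
  exact: leq_trans (size_concat_prefix k) (leq_addr _ _).
have zi : (index z (c k) < size (c k))%N by rewrite index_mem.
rewrite (@iconcatE k.+1); last by rewrite concat_prefixS size_cat ltn_add2l.
by rewrite concat_prefixS nth_cat ltnNge leq_addr /= addKn nth_index.
Qed.

Variable e : nat -> rel T.
Hypotheses (e_anti : forall K k, (K <= k)%N -> subrel (e k) (e K))
  (c_path : forall k, path (e k) a (c k)) (c_last : forall k, last a (c k) = a).

Lemma path_flatten_loops K ks : {in ks, forall k, (K <= k)%N} ->
  path (e K) a (flatten [seq c k | k <- ks]).
Proof.
elim: ks => [//|k ks IH] Kks /=; rewrite cat_path c_last IH ?andbT.
  by apply: sub_path (c_path k); apply/e_anti/Kks; rewrite mem_head.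
by move=> j jks; apply: Kks; rewrite inE jks orbT.
Qed.

Lemma iconcat_eventually_path K :
  exists N, forall n, (N <= n)%N -> e K (iconcat n) (iconcat n.+1).
Proof.
exists (size (concat_prefix K)) => n Kn.
have nK : (n.+1 < size (concat_prefix (K + n.+2)))%N.
  by have := size_concat_prefix (K + n.+2); lia.
rewrite (iconcatE (ltnW nK)) (iconcatE nK) concat_prefixD.
apply: sorted_nth_cat Kn _; last by rewrite -concat_prefixD.
by apply/path_sorted/path_flatten_loops => k; rewrite mem_iota; lia.
Qed.

End InfiniteConcat.

Section FiniteNet.
Context {R : realType} {X : metricType R}.

(* [compact_cover] is stated for pointed spaces; any point of [X] will do. *)
Variable x0 : X.
HB.instance Definition _ := isPointed.Build X x0.

Lemma finite_net (A : set X) (d : R) : compact A -> 0 < d ->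
  exists ps : seq X, (forall p, p \in ps -> A p) /\
    forall y, A y -> exists2 p, p \in ps & ball p d y.
Proof.
rewrite compact_cover => cA d0.
have [|y Ay|D DA AD] := cA X A (fun p => (ball p d)°).
- by move=> p _; exact: open_interior.
- by exists y => //; exact: nbhsx_ballx.
exists (finmap.enum_fset D); split=> [p /DA|y /AD[p /= pD yp]]; first by rewrite in_setE.
by exists p => //; exact: interior_subset.
Qed.

End FiniteNet.

Section Metric.
Context {R : realType} {X : metricType R}.

Definition inv_succ (k : nat) : R := k.+1%:R^-1.

Lemma inv_succ_gt0 k : 0 < inv_succ k.
Proof. by rewrite invr_gt0 ltr0Sn. Qed.

Lemma inv_succ_le K k : (K <= k)%N -> inv_succ k <= inv_succ K.
Proof. by move=> Kk; rewrite lef_pV2 ?posrE ?ltr0Sn // ler_nat. Qed.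

Lemma inv_succ_small (eps : R) : 0 < eps ->
  exists K, forall k, (K <= k)%N -> inv_succ k < eps.
Proof.
by move=> eps0; have [K _ HK] := near_infty_natSinv_lt (PosNum eps0); exists K.
Qed.

Lemma cvg_ball_inv_succ (u : nat -> X) y :
  (forall i, ball y (inv_succ i) (u i)) -> u @ \oo --> y.
Proof.
move=> yu; apply/cvg_ballP => eps eps0; have [K HK] := inv_succ_small eps0.
by exists K => // i /= Ki; apply: le_ball (yu i); apply/ltW/HK.
Qed.

Definition tails_dense_in (A : set X) (u : nat -> X) :=
  forall y, A y -> forall eps, 0 < eps -> forall M, exists2 n, (M <= n)%N & ball y eps (u n).

Definition dense_loop (A : set X) (e : rel X) (d : R) (a : X) (s : seq X) :=
  [/\ s != [::], path e a s, last a s = a, forall z, z \in s -> A z &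
    forall y, A y -> exists2 p, p \in s & ball p d y].

Lemma dense_loop_rev A e d a s : dense_loop A e d a s ->
  dense_loop A (fun u v => e v u) d a (rev (belast a s)).
Proof.
move=> [s0 es sa sA sd]; split.
- by rewrite -size_eq0 size_rev size_belast size_eq0.
- exact: rev_loop_path.
- exact: last_rev_belast.
- by move=> z; rewrite mem_rev mem_belast_loop // => /sA.
- by move=> y /sd[p ps yp]; exists p; rewrite // mem_rev mem_belast_loop.
Qed.

Lemma iconcat_dense_loops (A : set X) a (e : nat -> rel X) (c : nat -> seq X) :
  (forall K k, (K <= k)%N -> subrel (e k) (e K)) ->
  (forall k, dense_loop A (e k) (inv_succ k) a (c k)) ->
  [/\ forall n, A (iconcat a c n),
    forall K, exists N, forall n, (N <= n)%N -> e K (iconcat a c n) (iconcat a c n.+1) &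
    tails_dense_in A (iconcat a c)].
Proof.
move=> e_anti cd; have c_neq0 k : c k != [::] by case: (cd k).
split.
- move=> n; have [k] := iconcat_mem a c_neq0 n.
  by case: (cd k) => _ _ _ + _; apply.
- by apply: iconcat_eventually_path e_anti _ _ => k; case: (cd k).
- move=> y Ay eps eps0 M; have [K HK] := inv_succ_small eps0.
  have [_ _ _ _ /(_ y Ay)[p pc yp]] := cd (maxn K M).
  have [n Mn np] := iconcat_onto a c_neq0 pc.
  exists n; first by apply: leq_trans Mn; rewrite leq_maxr.
  by rewrite np; apply: le_ball (ball_sym yp); apply/ltW/HK; rewrite leq_maxl.
Qed.

Lemma omega_seqP (x : int -> X) y : omega_seq x y <->
  forall eps, 0 < eps -> forall M, exists2 n, M < n & ball y eps (x n).
Proof.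
split=> [yx eps eps0 M | yx M B /nbhs_ballP[eps /= eps0 epsB]].
  by have [_ [[n Mn <-] yn]] := yx M _ (nbhsx_ballx _ _ eps0); exists n.
by have [n Mn yn] := yx eps eps0 M; exists (x n); split; [exists n | apply: epsB].
Qed.

Lemma alpha_seqP (x : int -> X) y : alpha_seq x y <->
  forall eps, 0 < eps -> forall M, exists2 n, n < - M & ball y eps (x n).
Proof.
split=> [yx eps eps0 M | yx M B /nbhs_ballP[eps /= eps0 epsB]].
  by have [_ [[n Mn <-] yn]] := yx M _ (nbhsx_ballx _ _ eps0); exists n.
by have [n Mn yn] := yx eps eps0 M; exists (x n); split; [exists n | apply: epsB].
Qed.

Lemma omega_seq_sub (A : set X) x : closed A -> (forall i, A (x i)) -> omega_seq x `<=` A.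
Proof. by move=> clA xA y /(_ 0) y0; apply/clA/(closureS _ y0) => _ [n _ <-]. Qed.

Lemma alpha_seq_sub (A : set X) x : closed A -> (forall i, A (x i)) -> alpha_seq x `<=` A.
Proof. by move=> clA xA y /(_ 0) y0; apply/clA/(closureS _ y0) => _ [n _ <-]. Qed.

(* [Negz n] is [-(n+1)], so [v] is read backwards starting from index [-1]. *)
Definition two_sided (u v : nat -> X) (i : int) : X :=
  match i with Posz n => u n | Negz n => v n end.

Lemma two_sided_in (A : set X) u v : (forall n, A (u n)) -> (forall n, A (v n)) ->
  forall i, A (two_sided u v i).
Proof. by move=> uA vA []. Qed.

Lemma omega_two_sided (A : set X) u v : closed A ->
  (forall n, A (u n)) -> (forall n, A (v n)) -> tails_dense_in A u ->
  omega_seq (two_sided u v) = A.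
Proof.
move=> clA uA vA ud; apply/seteqP; split; first exact: omega_seq_sub clA (two_sided_in uA vA).
move=> y Ay; apply/omega_seqP => eps eps0 M.
have [n Mn yn] := ud y Ay eps eps0 `|M|.+1%N.
by exists (Posz n) => //; lia.
Qed.

Lemma alpha_two_sided (A : set X) u v : closed A ->
  (forall n, A (u n)) -> (forall n, A (v n)) -> tails_dense_in A v ->
  alpha_seq (two_sided u v) = A.
Proof.
move=> clA uA vA vd; apply/seteqP; split; first exact: alpha_seq_sub clA (two_sided_in uA vA).
move=> y Ay; apply/alpha_seqP => eps eps0 M.
have [n Mn yn] := vd y Ay eps eps0 `|M|%N.
by exists (Negz n) => //; rewrite NegzE; lia.
Qed.

End Metric.

Section Dynamics.
Context {R : realType} {X : metricType R} (f : X -> X).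

Definition chain_step (d : R) : rel X := fun u v => mdist (f u) v < d.

Lemma chain_step_anti K k : (K <= k)%N ->
  subrel (chain_step (inv_succ k)) (chain_step (inv_succ K)).
Proof. by move=> Kk u v /lt_le_trans; apply; apply: inv_succ_le. Qed.

Lemma ict_chain (A : set X) a b d : internally_chain_transitive f A ->
  A a -> A b -> 0 < d ->
  exists s, [/\ s != [::], path (chain_step d) a s, last a s = b &
    forall z, z \in s -> A z].
Proof.
move=> ict Aa Ab d0; have [N [x [N1 [<- [<- [xA xd]]]]]] := ict a b Aa Ab d d0.
pose s := mkseq (x \o succn) N.
have nth_s i : (i <= N)%N -> nth (x 0%N) (x 0%N :: s) i = x i.
  by case: i => [|i] //= iN; rewrite nth_mkseq.
exists s; split.
- by rewrite -size_eq0 size_mkseq -lt0n.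
- apply/(pathP (x 0%N)) => i; rewrite size_mkseq => iN.
  by rewrite -[nth _ s i]/(nth (x 0%N) (x 0%N :: s) i.+1) !nth_s //; [exact: xd | exact: ltnW].
- by have := nth_last (x 0%N) (x 0%N :: s); rewrite /= size_mkseq nth_s.
- by move=> z /mapP[i]; rewrite mem_iota => iN ->; apply: xA; lia.
Qed.

Lemma ict_tour (A : set X) b d : internally_chain_transitive f A -> A b -> 0 < d ->
  forall (ps : seq X) a, (forall p, p \in ps -> A p) -> A a ->
  exists s, [/\ s != [::], path (chain_step d) a s, last a s = b,
    forall z, z \in s -> A z & {subset ps <= s}].
Proof.
move=> ict Ab d0; elim=> [|p ps IH] a psA Aa.
  by have [s [s0 a_s sb sA]] := ict_chain ict Aa Ab d0; exists s.
have Ap : A p by apply: psA; rewrite mem_head.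
have [s1 [s10 as1 s1p s1A]] := ict_chain ict Aa Ap d0.
have [|s2 [s20 ps2 s2b s2A ps_s2]] := IH p _ Ap.
  by move=> q qps; apply: psA; rewrite inE qps orbT.
have p_s1 : p \in s1 by rewrite -s1p; case: (s1) s10 => // y t _; exact: (mem_last y t).
exists (s1 ++ s2); split.
- by rewrite -size_eq0 size_cat addn_eq0 size_eq0 negb_and s10.
- by rewrite cat_path as1 s1p.
- by rewrite last_cat s1p.
- by move=> z; rewrite mem_cat => /orP[/s1A|/s2A].
- by move=> q; rewrite inE mem_cat => /predU1P[->|/ps_s2->]; rewrite ?p_s1 ?orbT.
Qed.

Lemma ict_dense_loop (A : set X) a d : compact A -> internally_chain_transitive f A ->
  A a -> 0 < d -> exists s, dense_loop A (chain_step d) d a s.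
Proof.
move=> cA ict Aa d0; have [ps [psA psd]] := finite_net a cA d0.
have [s [s0 a_s sa sA ps_s]] := ict_tour ict Aa d0 psA Aa.
by exists s; split=> // y /psd[p /ps_s p_s yp]; exists p.
Qed.

Lemma two_sided_pseudo_orbit (u v : nat -> X) :
  (forall K, exists N, forall n, (N <= n)%N -> chain_step (inv_succ K) (u n) (u n.+1)) ->
  (forall K, exists N, forall n, (N <= n)%N -> chain_step (inv_succ K) (v n.+1) (v n)) ->
  two_sided_asymptotic_pseudo_orbit f (two_sided u v).
Proof.
move=> upath vpath eps eps0; have [K /(_ K (leqnn K)) Keps] := inv_succ_small eps0.
have [[Nu Nuu] [Nv Nvv]] := (upath K, vpath K).
exists (maxn Nu Nv).+2%:Z => -[n|n] Nn.
- have -> : n%:Z + 1 = n.+1 by lia.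
  by apply: lt_trans Keps; apply: Nuu; move: Nn => /=; lia.
- case: n Nn => [|n] Nn; first by move: Nn; rewrite /=; lia.
  have -> : Negz n.+1 + 1 = Negz n by rewrite !NegzE; lia.
  by apply: lt_trans Keps; apply: Nvv; move: Nn; rewrite NegzE normrN /=; lia.
Qed.

Lemma ict_two_sided_pseudo_orbit (A : set X) : compact [set: X] -> ICT f A ->
  exists x, [/\ two_sided_asymptotic_pseudo_orbit f x, alpha_seq x = A & omega_seq x = A].
Proof.
move=> cX [[a Aa] [clA ict]].
have cA : compact A := subclosed_compact clA cX (@subsetT _ A).
have /choice[c cd] k : exists s, dense_loop A (chain_step (inv_succ k)) (inv_succ k) a s.
  exact/ict_dense_loop/inv_succ_gt0.
have [uA upath ud] := iconcat_dense_loops (@chain_step_anti) cd.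
have [vA vpath vd] := iconcat_dense_loops
  (fun K k Kk u v => @chain_step_anti K k Kk v u) (fun k => dense_loop_rev (cd k)).
exists (two_sided (iconcat a c) (iconcat a (fun k => rev (belast a (c k))))).
by split; [exact: two_sided_pseudo_orbit | exact: alpha_two_sided | exact: omega_two_sided].
Qed.

Lemma iter_full_trajectory z : full_trajectory f z ->
  forall j (n : nat), iter n f (z j) = z (j + n%:Z).
Proof.
move=> zf j; elim=> [|n IH]; first by rewrite addr0.
by rewrite iterS IH zf; congr z; lia.
Qed.

Lemma omega_pt_full_trajectory z : full_trajectory f z ->
  omega_pt f (z 0) = omega_seq z.
Proof.
move=> zf; apply/seteqP; split=> y yz.
- move=> M; apply: (closureS _ (yz `|M|.+1%N)) => _ [n /= Mn <-].
  by exists n%:Z; [rewrite /=; lia | rewrite (iter_full_trajectory zf) add0r].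
- move=> N; apply: (closureS _ (yz (N%:Z - 1))) => _ [[n|n] /= Nn <-]; last by lia.
  by exists n; [rewrite /=; lia | rewrite (iter_full_trajectory zf) add0r].
Qed.

Lemma increasing_choice (P : nat -> nat -> Prop) :
  (forall i M, exists2 k, (M < k)%N & P i k) ->
  exists n : nat -> nat, (forall i, n i < n i.+1)%N /\ forall i, P i (n i).
Proof.
move=> HP; have /choice[g gP] : forall iM : nat * nat, exists k, (iM.2 < k)%N /\ P iM.1 k.
  by move=> [i M]; have [k Mk Pk] := HP i M; exists k.
pose fix n i := if i is i'.+1 then g (i, n i') else g (0, 0)%N.
exists n; split=> [i|[|i]]; first exact: (gP (i.+1, n i)).1.
  exact: (gP (0, 0)%N).2.
exact: (gP (i.+1, n i)).2.
Qed.

Lemma alpha_seq_preimages z y : full_trajectory f z -> alpha_seq z y ->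
  exists (ys : nat -> X) (n : nat -> nat), (forall i, (n i < n i.+1)%N) /\
    (forall i, iter (n i) f (ys i) = z 0) /\ ys @ \oo --> y.
Proof.
move=> zf /alpha_seqP yz.
have [|n [n_incr yn]] := @increasing_choice (fun i k => ball y (inv_succ i) (z (- k%:Z))).
  move=> i M; have [[k|k] Mk yk] := yz _ (inv_succ_gt0 i) M%:Z; first by lia.
  by exists k.+1; [lia | rewrite -NegzE].
exists (fun i => z (- (n i)%:Z)), n; do !split => //.
- by move=> i; rewrite (iter_full_trajectory zf) addNr.
- exact: cvg_ball_inv_succ.
Qed.

Lemma gamma_limit_full_trajectory z : full_trajectory f z ->
  alpha_seq z = omega_seq z -> gamma_limit f (z 0) = omega_seq z.
Proof.
move=> zf az; rewrite -omega_pt_full_trajectory //; apply/seteqP; split=> [y []//|y yz].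
split=> //; apply: alpha_seq_preimages => //.
by rewrite az -omega_pt_full_trajectory.
Qed.

End Dynamics.

Theorem mainTheorem4 (R : realType) (X : metricType R) (f : X -> X) :
  compact [set: X] -> continuous f ->
  gamma_restricted_two_sided_orbital_limit_shadowing f ->
  ICT f `<=` gamma_f f.
Proof.
move=> cX _ shadowing A ictA.
have [x [x_po xA Ax]] := ict_two_sided_pseudo_orbit cX ictA.
have [z [zf [zA Az]]] := shadowing x x_po (etrans xA (esym Ax)).
have zAz : alpha_seq z = omega_seq z by rewrite zA Az xA Ax.
by exists (z 0) => //; rewrite gamma_limit_full_trajectory // Az Ax.
Qed.
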